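(* The Heisenberg Lie algebra $H(m)$ is $2$-capable if and only if $m=1$.
   Context: All Lie algebras are over a fixed field. The Heisenberg Lie algebra $H(m)$ is the Lie algebra of dimension $2m+1$ with $H(m)^2=Z(H(m))$ and $\dim H(m)^2=1$. A Lie algebra $L$ is $2$-capable if $L\cong H/Z_2(H)$ for some Lie algebra $H$, where $Z_2(H)$ is the second term of the upper central series of $H$. *)

From HB Require Import structures.
From mathcomp Require Import all_boot all_order all_algebra.
Set Implicit Arguments. Unset Strict Implicit. Unset Printing Implicit Defensive.
Import GRing.Theory.
Local Open Scope ring_scope.

Definition is_lie (F : fieldType) (V : lmodType F) (br : V -> V -> V) : Prop :=
  [/\ (forall (a : F) (x y z : V), br (a *: x + y) z = a *: br x z + br y z),
      (forall (a : F) (x y z : V), br z (a *: x + y) = a *: br z x + br z y),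
      (forall x : V, br x x = 0)
    & (forall x y z : V, br x (br y z) + br y (br z x) + br z (br x y) = 0)].

Definition lie_hom (F : fieldType) (V W : lmodType F)
    (brV : V -> V -> V) (brW : W -> W -> W) (f : V -> W) : Prop :=
  (forall (a : F) (x y : V), f (a *: x + y) = a *: f x + f y) /\
  (forall x y : V, f (brV x y) = brW (f x) (f y)).

Definition lie_center (F : fieldType) (V : lmodType F) (br : V -> V -> V) (x : V) : Prop :=
  forall y : V, br x y = 0.

(* second center Z_2(L): Z_2(L)/Z(L) = Z(L/Z(L)) *)
Definition lie_center2 (F : fieldType) (V : lmodType F) (br : V -> V -> V) (x : V) : Prop :=
  forall y : V, lie_center br (br x y).

Definition lie_derived (F : fieldType) (V : lmodType F) (br : V -> V -> V) (x : V) : Prop :=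
  exists s : seq (V * V), x = \sum_(p <- s) br p.1 p.2.

Definition heisenberg (F : fieldType) (L : vectType F) (br : L -> L -> L) (m : nat) : Prop :=
  [/\ \dim (fullv : {vspace L}) = (2 * m + 1)%N,
      (forall x : L, lie_derived br x <-> lie_center br x)
    & (exists2 z : L, z != 0 &
         forall x : L, lie_derived br x <-> exists a : F, x = a *: z)].

(* L is 2-capable: L is isomorphic to H/Z_2(H) for some Lie algebra H, i.e.
   there is a surjective Lie algebra homomorphism H -> L with kernel Z_2(H). *)
Definition two_capable (F : fieldType) (L : lmodType F) (brL : L -> L -> L) : Prop :=
  exists (H : lmodType F) (brH : H -> H -> H) (f : H -> L),
    [/\ is_lie brH, lie_hom brH brL f,
        (forall y : L, exists x : H, f x = y)
      & (forall x : H, f x = 0 <-> lie_center2 brH x)].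

From HB Require Import structures.
From mathcomp Require Import all_boot all_order all_algebra.
From mathcomp Require Import ring zify.
From Stdlib Require Import Classical.
Set Implicit Arguments. Unset Strict Implicit. Unset Printing Implicit Defensive.
Import GRing.Theory.
Local Open Scope ring_scope.

(* Let [z] span the derived algebra (= centre) of H(m).  Any x, y with
   [x, y] != 0 give independent x, y, [x, y], so m >= 1.  For m >= 2 the
   centralizer C(k) of any k has codimension at most 1 and is non-abelian:
   otherwise C(k) :&: C(y), for some y with [y, k] != 0, would lie in the
   centre, which is the line <[z]>, forcing dim H(m) <= 3.  Hence z = [u, v]
   with u, v in C(k), for every k.  Now let f : H -> H(m) have kernel Z_2(H)
   and f c = z; lifting such u, v for k = f h, the Jacobi identity gives
   [[c, h], h'] = 0 for all h', so c is in Z_2(H) and z = f c = 0.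
   For m = 1, H(1) = <x, y, [x, y]> is the image of the 5-dimensional algebra
   [e0, e1] = e2, [e0, e2] = e3, [e0, e3] = e4, [e1, e2] = e4, whose second
   centre is <e3, e4>. *)

Section LieAlgebra.
Variables (F : fieldType) (V : lmodType F) (br : V -> V -> V).
Hypothesis lieV : is_lie br.

Lemma lieDl x y z : br (x + y) z = br x z + br y z.
Proof. by case: lieV => linl _ _ _; have := linl 1 x y z; rewrite !scale1r. Qed.

Lemma lieDr x y z : br z (x + y) = br z x + br z y.
Proof. by case: lieV => _ linr _ _; have := linr 1 x y z; rewrite !scale1r. Qed.

Lemma lie0l z : br 0 z = 0.
Proof. by apply: (addrI (br 0 z)); rewrite -lieDl !addr0. Qed.

Lemma lie0r z : br z 0 = 0.
Proof. by apply: (addrI (br z 0)); rewrite -lieDr !addr0. Qed.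

Lemma lieZl a x z : br (a *: x) z = a *: br x z.
Proof. by case: lieV => linl _ _ _; have := linl a x 0 z; rewrite !addr0 lie0l addr0. Qed.

Lemma lieZr a x z : br z (a *: x) = a *: br z x.
Proof. by case: lieV => _ linr _ _; have := linr a x 0 z; rewrite !addr0 lie0r addr0. Qed.

Lemma lieNl x z : br (- x) z = - br x z.
Proof. by rewrite -scaleN1r lieZl scaleN1r. Qed.

Lemma lieBl x y z : br (x - y) z = br x z - br y z.
Proof. by rewrite lieDl lieNl. Qed.

Lemma lie_xx x : br x x = 0.
Proof. by case: lieV. Qed.

Lemma lieC x y : br x y = - br y x.
Proof.
apply/eqP; rewrite -addr_eq0.
by have := lie_xx (x + y); rewrite lieDl !lieDr !lie_xx add0r addr0 => ->.
Qed.

Lemma lie_derivation x y h : br (br x y) h = br (br x h) y - br (br y h) x.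
Proof.
have -> : br (br x y) h = br x (br y h) + br y (br h x).
  case: lieV => _ _ _ /(_ h x y) jac.
  by apply/eqP; rewrite lieC eq_sym -addr_eq0 [_ + br h _]addrC addrA jac.
by rewrite (lieC x (br y h)) (lieC y (br h x)) (lieC h x) lieNl opprK addrC.
Qed.

Lemma lie_centerB x y :
  lie_center br x -> lie_center br y -> lie_center br (x - y).
Proof. by move=> cx cy w; rewrite lieBl cx cy subr0. Qed.

Lemma lie_center2_br x y h :
  lie_center2 br (br x h) -> lie_center2 br (br y h) ->
  lie_center br (br (br x y) h).
Proof. by move=> xh yh; rewrite lie_derivation; apply: lie_centerB. Qed.

End LieAlgebra.

Lemma lie_derived_br (F : fieldType) (V : lmodType F) (br : V -> V -> V) u v :
  lie_derived br (br u v).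
Proof. by exists [:: (u, v)]; rewrite big_seq1. Qed.

Section LieHom.
Variables (F : fieldType) (V W : lmodType F).
Variables (brV : V -> V -> V) (brW : W -> W -> W) (f : V -> W).
Hypothesis homf : lie_hom brV brW f.

Lemma lie_homB x y : f (x - y) = f x - f y.
Proof. by case: homf => lin _; rewrite addrC -scaleN1r lin scaleN1r addrC. Qed.

Lemma lie_homM x y : f (brV x y) = brW (f x) (f y).
Proof. by case: homf. Qed.

End LieHom.

Lemma two_capable_centralizer_br_eq0 (F : fieldType) (L : lmodType F)
    (br : L -> L -> L) (z : L) :
  two_capable br ->
  (forall k, exists u v, [/\ br u k = 0, br v k = 0 & br u v = z]) -> z = 0.
Proof.
move=> [H [brH [f [lieH homf f_onto f_ker]]]] z_br.
have ker_Z2 x : f x = 0 -> lie_center2 brH x by move/f_ker.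
have [c fc] := f_onto z.
suff /f_ker : lie_center2 brH c by rewrite fc.
move=> h; have [u [v [uk vk uv]]] := z_br (f h).
have [[U fU] [V fV]] := (f_onto u, f_onto v).
have UVc : lie_center2 brH (brH U V - c).
  by apply: ker_Z2; rewrite (lie_homB homf) (lie_homM homf) fU fV uv fc subrr.
have Uh : lie_center2 brH (brH U h) by apply: ker_Z2; rewrite (lie_homM homf) fU.
have Vh : lie_center2 brH (brH V h) by apply: ker_Z2; rewrite (lie_homM homf) fV.
rewrite -[c](subKr (brH U V)) (lieBl lieH).
by apply: lie_centerB => //; apply: lie_center2_br.
Qed.

Section Cover.
Variable F : fieldType.
Local Notation N := 'rV[F]_5.

Definition cf (x : N) (i : nat) : F := x 0 (inord i).

Definition row5 (g : nat -> F) : N := \row_(i < 5) g i.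

Lemma cf_row5 g i : (i < 5)%N -> cf (row5 g) i = g i.
Proof. by move=> lt_i5; rewrite /cf mxE inordK. Qed.

Lemma cfD x y i : cf (x + y) i = cf x i + cf y i.
Proof. by rewrite /cf mxE. Qed.

Lemma cfZ a x i : cf (a *: x) i = a * cf x i.
Proof. by rewrite /cf mxE. Qed.

Lemma cf0 i : cf 0 i = 0.
Proof. by rewrite /cf mxE. Qed.

Lemma cf_inj x y : (forall i, (i < 5)%N -> cf x i = cf y i) -> x = y.
Proof. by move=> xy; apply/rowP => j; have := xy j (ltn_ord j); rewrite /cf inord_val. Qed.

(* In the basis e_0, ..., e_4: [e0, e1] = e2, [e0, e2] = e3, [e0, e3] = e4
   and [e1, e2] = e4. *)
Definition cover_br (x y : N) : N := row5 (fun i =>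
  match i with
  | 2 => cf x 0 * cf y 1 - cf x 1 * cf y 0
  | 3 => cf x 0 * cf y 2 - cf x 2 * cf y 0
  | 4 => cf x 0 * cf y 3 - cf x 3 * cf y 0 + cf x 1 * cf y 2 - cf x 2 * cf y 1
  | _ => 0
  end).

Definition cover_vec (a b c : F) : N :=
  row5 (fun i => match i with 0 => a | 1 => b | 2 => c | _ => 0 end).

Let cfE := (cfD, cfZ, cf0, cf_row5).

Lemma cover_lie : is_lie cover_br.
Proof.
by split=> *; apply: cf_inj => -[|[|[|[|[|i]]]]] // _; rewrite !cfE //=; ring.
Qed.

Lemma cover_center2 a :
  lie_center2 cover_br a <-> [/\ cf a 0 = 0, cf a 1 = 0 & cf a 2 = 0].
Proof.
split=> [Z2a | [a0 a1 a2] u v]; last first.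
  by apply: cf_inj => -[|[|[|[|[|i]]]]] // _; rewrite !cfE //= ?a0 ?a1 ?a2; ring.
(* [[a, e0], e0] = a1 e3 + a2 e4 and [[a, e1], e0] = - a0 e3. *)
have e00 := Z2a (cover_vec 1 0 0) (cover_vec 1 0 0).
have e10 := Z2a (cover_vec 0 1 0) (cover_vec 1 0 0).
move: (congr1 (cf^~ 3) e00) (congr1 (cf^~ 4) e00) (congr1 (cf^~ 3) e10).
rewrite !cfE //= => e00_3 e00_4 e10_3.
split; [apply: oppr_inj; rewrite oppr0 -e10_3 | rewrite -e00_3 | rewrite -e00_4].
all: by ring.
Qed.

End Cover.

Section CentralDerived.
Variables (F : fieldType) (L : vectType F) (br : L -> L -> L).
Hypothesis lieL : is_lie br.
Hypothesis br_central : forall u v w, br (br u v) w = 0.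
Variables x y : L.
Hypothesis xy_neq0 : br x y != 0.

Lemma br_triple_comb_eq0 a b c :
  a *: x + b *: y + c *: br x y = 0 -> [/\ a = 0, b = 0 & c = 0].
Proof.
move=> abc.
have brEl w : br (a *: x + b *: y + c *: br x y) w = a *: br x w + b *: br y w.
  by rewrite !(lieDl lieL) !(lieZl lieL) br_central scaler0 addr0.
have a0 : a = 0.
  apply/eqP; move: (brEl y); rewrite abc (lie0l lieL) (lie_xx lieL) scaler0 addr0.
  by move/eqP; rewrite eq_sym scaler_eq0 (negbTE xy_neq0) orbF.
have b0 : b = 0.
  apply/eqP; move: (brEl x); rewrite abc (lie0l lieL) (lie_xx lieL) scaler0 add0r.
  by rewrite (lieC lieL y) scalerN => /eqP; rewrite eq_sym oppr_eq0 scaler_eq0 (negbTE xy_neq0) orbF.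
split=> //; apply/eqP; move: abc; rewrite a0 b0 !scale0r !add0r => /eqP.
by rewrite scaler_eq0 (negbTE xy_neq0) orbF.
Qed.

Lemma free_br_triple : free [:: x; y; br x y].
Proof.
apply/(freeP (X := in_tuple [:: x; y; br x y])) => k.
rewrite !big_ord_recl big_ord0 addr0 addrA /= => /br_triple_comb_eq0[k0 k1 k2].
by case=> -[|[|[|//]]] i; [rewrite -k0 | rewrite -k1 | rewrite -k2]; congr k; apply: val_inj.
Qed.

Lemma dim_ge3 : (3 <= \dim {:L})%N.
Proof.
have /eqP dim_span := free_br_triple.
by rewrite -[3%N]dim_span dimvS ?subvf.
Qed.

Definition cover_map (a : 'rV[F]_5) : L := cf a 0 *: x + cf a 1 *: y + cf a 2 *: br x y.

Lemma cover_map_hom : lie_hom (@cover_br F) br cover_map.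
Proof.
split=> [c u v | u v].
  rewrite /cover_map !cfD !cfZ !scalerDl -!scalerA !scalerDr.
  by rewrite (addrACA (c *: _)) (addrACA _ _ (c *: (_ *: br x y))).
have br_centralr p q w : br w (br p q) = 0 by rewrite (lieC lieL) br_central oppr0.
rewrite /cover_map !cf_row5 //=.
rewrite !(lieDl lieL) !(lieDr lieL) !(lieZl lieL) !(lieZr lieL) !(lie_xx lieL).
rewrite !br_central !br_centralr (lieC lieL y x).
by rewrite !scale0r !scaler0 !add0r !addr0 !scalerN !scalerA scalerBl.
Qed.

Lemma cover_map_eq0 a : cover_map a = 0 <-> lie_center2 (@cover_br F) a.
Proof.
rewrite cover_center2; split=> [/br_triple_comb_eq0 // | [a0 a1 a2]].
by rewrite /cover_map a0 a1 a2 !scale0r !addr0.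
Qed.

Lemma cover_map_onto : \dim {:L} = 3%N -> forall w, exists a, cover_map a = w.
Proof.
move=> dimL w.
have span_full : <<[:: x; y; br x y]>>%VS = fullv.
  by apply/eqP; rewrite eqEdim subvf dimL (eqP free_br_triple).
have : w \in <<[:: x; y; br x y]>>%VS by rewrite span_full memvf.
rewrite !span_cons span_nil addv0.
move=> /memv_addP [_ /vlineP [a ->] [_ /memv_addP [_ /vlineP [b ->] [_ /vlineP [c ->] ->]] ->]].
by exists (cover_vec a b c); rewrite /cover_map !cf_row5 //= addrA.
Qed.

Lemma two_capable_of_dim3 : \dim {:L} = 3%N -> two_capable br.
Proof.
move=> dimL; exists _, (@cover_br F), cover_map; split.
- exact: cover_lie.
- exact: cover_map_hom.
- exact: cover_map_onto.
- exact: cover_map_eq0.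
Qed.

End CentralDerived.

Section DerivedLine.
Variables (F : fieldType) (L : vectType F) (br : L -> L -> L) (z : L).
Hypothesis lieL : is_lie br.
Hypothesis z_neq0 : z != 0.
Hypothesis derived_line : forall x, lie_derived br x <-> exists a, x = a *: z.
Hypothesis derived_center : forall x, lie_derived br x <-> lie_center br x.

Lemma br_central u v w : br (br u v) w = 0.
Proof. exact: (derived_center _).1 (lie_derived_br br u v) w. Qed.

Lemma center_sub_line x : lie_center br x -> x \in <[z]>%VS.
Proof. by move/derived_center/derived_line => [a ->]; apply/memvZ/memv_line. Qed.

Lemma memv_br_line u v : br u v \in <[z]>%VS.
Proof. exact/center_sub_line/br_central. Qed.

Lemma exists_br_neq0 : exists u v, br u v != 0.
Proof.
have [s zs] : lie_derived br z by apply/derived_line; exists 1; rewrite scale1r.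
move: z_neq0; rewrite {}zs; elim: s => [|[u v] s IHs]; first by rewrite big_nil eqxx.
have [uv0 | uv_neq0] := eqVneq (br u v) 0; last by exists u, v.
by rewrite big_cons uv0 add0r.
Qed.

Definition adr (k x : L) := br x k.

Lemma adr_is_linear k : linear (adr k).
Proof. by move=> a u v; rewrite /adr (lieDl lieL) (lieZl lieL). Qed.

HB.instance Definition _ k :=
  GRing.isLinear.Build F L L *:%R (adr k) (adr_is_linear k).

Definition centralizer k : {vspace L} := lker (linfun (adr k)).

Lemma memv_centralizer k x : (x \in centralizer k) = (br x k == 0).
Proof. by rewrite memv_ker lfunE. Qed.

Lemma dim_centralizer k : (\dim {:L} <= (\dim (centralizer k)).+1)%N.
Proof.
have := limg_ker_dim (linfun (adr k)) fullv; rewrite capfv => <-.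
suff : (\dim (limg (linfun (adr k))) <= \dim <[z]>)%N.
  by rewrite dim_vline z_neq0 /centralizer; lia.
apply: dimvS; apply/subvP => _ /memv_imgP [v _ ->]; rewrite lfunE.
exact: memv_br_line.
Qed.

Section AbelianCentralizer.
Variable k : L.
Hypothesis abelianCk : forall u v, br u k = 0 -> br v k = 0 -> br u v = 0.

Lemma centralizer_cap_sub_line y :
  br y k != 0 -> (centralizer k :&: centralizer y <= <[z]>)%VS.
Proof.
move=> yk_neq0; apply/subvP => w.
rewrite memv_cap !memv_centralizer => /andP[/eqP wk /eqP wy].
apply: center_sub_line => x.
have [/vlineP [a xk] /vlineP [b yk]] := (memv_br_line x k, memv_br_line y k).
have b_neq0 : b != 0 by apply: contraNneq yk_neq0 => b0; rewrite yk b0 scale0r.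
have qk : br (x - (a / b) *: y) k = 0.
  by rewrite (lieBl lieL) (lieZl lieL) xk yk scalerA divfK // subrr.
rewrite -[x](subrK ((a / b) *: y)) (lieDr lieL) (lieZr lieL) wy scaler0 addr0.
exact: abelianCk.
Qed.

Lemma dim_le3_of_abelian_centralizer : (\dim {:L} <= 3)%N.
Proof.
have [y yk_neq0] : exists y, br y k != 0.
  apply: NNPP => none.
  have k_central w : br w k = 0 by apply: NNPP => wk; apply: none; exists w; apply/eqP.
  by have [u [v /eqP []]] := exists_br_neq0; apply: abelianCk.
(* 2 (dim L - 1) <= dim (C(k) + C(y)) + dim (C(k) :&: C(y)) <= dim L + 1 *)
have := dimvS (centralizer_cap_sub_line yk_neq0); rewrite dim_vline z_neq0.
have := dimv_sum_cap (centralizer k) (centralizer y).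
have := dimvS (subvf (centralizer k + centralizer y)).
have := dim_centralizer k; have := dim_centralizer y.
lia.
Qed.

End AbelianCentralizer.

Lemma centralizer_br_line k : (3 < \dim {:L})%N ->
  exists u v, [/\ br u k = 0, br v k = 0 & br u v = z].
Proof.
move=> dimL.
have [u [v [uk vk uv_neq0]]] :
    exists u v, [/\ br u k = 0, br v k = 0 & br u v != 0].
  apply: NNPP => none; move: dimL; rewrite ltnNge (@dim_le3_of_abelian_centralizer k) //.
  by move=> u v uk vk; apply: NNPP => uv; apply: none; exists u, v; split=> //; apply/eqP.
have /vlineP [a uv] := memv_br_line u v.
have a_neq0 : a != 0 by apply: contraNneq uv_neq0 => a0; rewrite uv a0 scale0r.
exists (a^-1 *: u), v.
by rewrite !(lieZl lieL) uk uv scalerA mulVf // scale1r scaler0.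
Qed.

End DerivedLine.

Theorem theorem3p3 (F : fieldType) (m : nat) (L : vectType F)
    (br : L -> L -> L) (HL : is_lie br) (HH : heisenberg br m) :
  two_capable br <-> m = 1%N.
Proof.
have [dimL derived_center [z z_neq0 derived_line]] := HH.
have [x [y xy_neq0]] := exists_br_neq0 z_neq0 derived_line.
have central := br_central derived_center.
have := dim_ge3 HL central xy_neq0; rewrite dimL => m_gt0.
split=> [capable | m1]; last first.
  by apply: (two_capable_of_dim3 HL central xy_neq0); move: dimL; rewrite m1.
suff : ~ (1 < m)%N by lia.
move=> m_gt1; suff z0 : z = 0 by rewrite z0 eqxx in z_neq0.
apply: (two_capable_centralizer_br_eq0 capable) => k.
by apply: centralizer_br_line => //; rewrite dimL; lia.
Qed.
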